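(* Let $\mathcal{X}$ be an input space, let the label space be binary, $\mathcal{Y}=\{0,1\}$, and let $(x,y)$ be distributed according to a fixed joint distribution on $\mathcal{X}\times\mathcal{Y}$. Let $n_e\ge 1$ and let $h_1,\dots,h_{n_e}:\mathcal{X}\to\mathcal{Y}$ be fixed expert predictors, with costs $c_j(x,y)=\mathbb{I}_{h_j(x)\neq y}$ and $\bar c_j(x,y)=1-c_j(x,y)$ for $j=1,\dots,n_e$. Let $\mathcal{H}$ be a hypothesis class of base predictors $h:\mathcal{X}\to\mathcal{Y}$ and $\mathcal{R}$ a hypothesis class of deferral functions $r=(r_0,\dots,r_{n_e}):\mathcal{X}\to\mathbb{R}^{n_e+1}$, with induced decision $r(x)=\arg\max_{j\in\{0,\dots,n_e\}} r_j(x)$. Define the deferral loss $$L_{\mathrm{def}}(h,r,x,y)=\mathbb{I}_{h(x)\neq y}\,\mathbb{I}_{r(x)=0}+\sum_{j=1}^{n_e} c_j(x,y)\,\mathbb{I}_{r(x)=j},$$ and, for a multiclass surrogate loss $l_2(r,x,k)$ ($k\in\{0,\dots,n_e\}$), the surrogate loss (for a given $h$) $$L^h_{\mathrm{surr}}(r,x,y)=\mathbb{I}_{h(x)=y}\,l_2(r,x,0)+\sum_{j=1}^{n_e}\bar c_j(x,y)\,l_2(r,x,j).$$ Let $l_1$ be a surrogate loss for the base predictor. Assume that $l_1$ admits an $\mathcal{H}$-consistency bound with respect to the binary 0-1 loss $\mathbb{I}_{h(x)\neq y}$ with a non-decreasing concave function $\Gamma_1$ satisfying $\Gamma_1(0)=0$,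 and that $l_2$ admits an $\mathcal{R}$-consistency bound with respect to the multiclass (with $n_e+1$ classes) 0-1 loss $\mathbb{I}_{r(x)\neq k}$ with a non-decreasing concave function $\Gamma_2$ satisfying $\Gamma_2(0)=0$. Then for all $h\in\mathcal{H}$ and $r\in\mathcal{R}$, $$\mathcal{E}_{L_{\mathrm{def}}}(h,r)-\mathcal{E}^*_{L_{\mathrm{def}}}(\mathcal{H},\mathcal{R})+\mathcal{M}_{L_{\mathrm{def}}}(\mathcal{H},\mathcal{R})\le \Gamma_1\big(\mathcal{E}_{l_1}(h)-\mathcal{E}^*_{l_1}(\mathcal{H})+\mathcal{M}_{l_1}(\mathcal{H})\big)+n_e\,\Gamma_2\big(\mathcal{E}_{L^h_{\mathrm{surr}}}(r)-\mathcal{E}^*_{L^h_{\mathrm{surr}}}(\mathcal{R})+\mathcal{M}_{L^h_{\mathrm{surr}}}(\mathcal{R})\big),$$ and the factor $n_e$ can be removed when $\Gamma_2$ is linear. In particular, if $\mathcal{H}=\{h_0\}$ is a singleton, this yields an $\mathcal{R}$-consistency bound of $L^{h_0}_{\mathrm{surr}}$ with respect to $L^{h_0}_{\mathrm{def}}(r,x,y):=L_{\mathrm{def}}(h_0,r,x,y)$, namely for all $r\in\mathcal{R}$: $\mathcal{E}_{L^{h_0}_{\mathrm{def}}}(r)-\mathcal{E}^*_{L^{h_0}_{\mathrm{def}}}(\mathcal{R})+\mathcal{M}_{L^{h_0}_{\mathrm{def}}}(\mathcal{R})\le n_e\,\Gamma_2\big(\mathcal{E}_{L^{h_0}_{\mathrm{surr}}}(r)-\mathcal{E}^*_{L^{h_0}_{\mathrm{surr}}}(\mathcal{R})+\mathcal{M}_{L^{h_0}_{\mathrm{surr}}}(\mathcal{R})\big)$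 (without the factor $n_e$ if $\Gamma_2$ is linear).
   Context: For a hypothesis class $\mathcal{G}$ and a non-negative loss $\ell(g,x,y)$, define $\mathcal{E}_\ell(g)=\mathbb{E}_{x,y}[\ell(g,x,y)]$, $\mathcal{E}^*_\ell(\mathcal{G})=\inf_{g\in\mathcal{G}}\mathcal{E}_\ell(g)$, and the minimizability gap $\mathcal{M}_\ell(\mathcal{G})=\mathcal{E}^*_\ell(\mathcal{G})-\mathbb{E}_x\big[\inf_{g\in\mathcal{G}}\mathbb{E}_{y\mid x}[\ell(g,x,y)]\big]$. For the deferral loss, $\mathcal{G}=\mathcal{H}\times\mathcal{R}$ with $g=(h,r)$. A $\mathcal{G}$-consistency bound of a surrogate loss $\ell_s$ with respect to a target loss $\ell_o$ with function $\Gamma$ (non-decreasing, concave, $\Gamma(0)=0$) means: for all $g\in\mathcal{G}$, $\mathcal{E}_{\ell_o}(g)-\mathcal{E}^*_{\ell_o}(\mathcal{G})+\mathcal{M}_{\ell_o}(\mathcal{G})\le\Gamma\big(\mathcal{E}_{\ell_s}(g)-\mathcal{E}^*_{\ell_s}(\mathcal{G})+\mathcal{M}_{\ell_s}(\mathcal{G})\big)$. In the multiclass 0-1 loss for $r$, the classes are $\{0,1,\dots,n_e\}$ and the prediction is $r(x)=\arg\max_j r_j(x)$. *)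

From HB Require Import structures.
From mathcomp Require Import all_boot all_order all_algebra.
From mathcomp Require Import all_classical all_reals all_analysis.
From mathcomp Require Import measurable_realfun lebesgue_measure lebesgue_integral probability.

Set Implicit Arguments.
Unset Strict Implicit.
Unset Printing Implicit Defensive.

Import Order.TTheory GRing.Theory Num.Theory.
Local Open Scope classical_set_scope.
Local Open Scope ring_scope.
Local Open Scope ereal_scope.

Section Defs.
Context {R : realType} {d : measure_display} {X : measurableType d}.

(* A conditional label distribution: p x is a probability vector on the finite label set Y.
   A joint distribution on X * Y is represented by its marginal P on X together with p. *)
Definition label_dist {Y : finType} (p : X -> Y -> R) : Prop :=
  (forall x y, (0 <= p x y)%R) /\ (forall x, (\sum_(y : Y) p x y)%R = 1%R).

Definition measurable_label_dist {Y : finType} (p : X -> Y -> R) : Prop :=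
  label_dist p /\ forall y : Y, measurable_fun setT (fun x => p x y).

Definition cond_risk {Y : finType} {G : Type} (p : X -> Y -> R)
  (l : G -> X -> Y -> R) (g : G) (x : X) : R :=
  (\sum_(y : Y) p x y * l g x y)%R.

Definition exp_risk {Y : finType} {G : Type} (P : probability X R) (p : X -> Y -> R)
  (l : G -> X -> Y -> R) (g : G) : \bar R :=
  \int[P]_x (cond_risk p l g x)%:E.

Definition best_risk {Y : finType} {G : Type} (P : probability X R) (p : X -> Y -> R)
  (l : G -> X -> Y -> R) (Gs : set G) : \bar R :=
  ereal_inf [set exp_risk P p l g | g in Gs].

Definition cond_best {Y : finType} {G : Type} (p : X -> Y -> R)
  (l : G -> X -> Y -> R) (Gs : set G) (x : X) : \bar R :=
  ereal_inf [set (cond_risk p l g x)%:E | g in Gs].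

Definition min_gap {Y : finType} {G : Type} (P : probability X R) (p : X -> Y -> R)
  (l : G -> X -> Y -> R) (Gs : set G) : \bar R :=
  best_risk P p l Gs - \int[P]_x cond_best p l Gs x.

Definition regret_gap {Y : finType} {G : Type} (P : probability X R) (p : X -> Y -> R)
  (l : G -> X -> Y -> R) (Gs : set G) (g : G) : \bar R :=
  exp_risk P p l g - best_risk P p l Gs + min_gap P p l Gs.

Definition admissible_Gamma (Gam : R -> R) : Prop :=
  Gam 0%R = 0%R /\
  (forall u v, (0 <= u)%R -> (u <= v)%R -> (Gam u <= Gam v)%R) /\
  (forall u v t, (0 <= u)%R -> (0 <= v)%R -> (0 <= t <= 1)%R ->
     (t * Gam u + (1 - t) * Gam v <= Gam (t * u + (1 - t) * v))%R).

(* When E_{l_s}(g) = +oo the right-hand side is +oo and the bound is trivial,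
   so only the case E_{l_s}(g) < +oo is required. *)
Definition consistency_bound {Y : finType} {G : Type} (Gs : set G)
  (ls lo : G -> X -> Y -> R) (Gam : R -> R) : Prop :=
  forall (P : probability X R) (p : X -> Y -> R), measurable_label_dist p ->
  forall g, Gs g -> exp_risk P p ls g < +oo ->
    regret_gap P p lo Gs g <= (Gam (fine (regret_gap P p ls Gs g)))%:E.

Definition inf_measurable {Y : finType} {G : Type} (l : G -> X -> Y -> R) (Gs : set G) : Prop :=
  forall p : X -> Y -> R, measurable_label_dist p ->
    measurable_fun [set: X] (fun x => cond_best p l Gs x : \bar R).

Definition defer_dec {ne : nat} (r : X -> 'I_ne.+1 -> R) (x : X) : 'I_ne.+1 :=
  [arg max_(j > ord0) r x j]%O.

Definition zero_one_bin (h : X -> 'I_2) (x : X) (y : 'I_2) : R := (h x != y)%:R.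

Definition zero_one_multi {ne : nat} (r : X -> 'I_ne.+1 -> R) (x : X) (k : 'I_ne.+1) : R :=
  (defer_dec r x != k)%:R.

(* expert j (j : 'I_ne, i.e. expert number j+1) cost c_j(x,y) = I_{h_j(x) <> y} *)
Definition cost {ne : nat} (experts : 'I_ne -> X -> 'I_2) (j : 'I_ne) (x : X) (y : 'I_2) : R :=
  (experts j x != y)%:R.

(* L_def(h,r,x,y); deferring to expert j+1 corresponds to class lift ord0 j *)
Definition L_def {ne : nat} (experts : 'I_ne -> X -> 'I_2)
  (g : (X -> 'I_2) * (X -> 'I_ne.+1 -> R)) (x : X) (y : 'I_2) : R :=
  ((g.1 x != y)%:R * (defer_dec g.2 x == ord0)%:R
   + \sum_(j < ne) cost experts j x y * (defer_dec g.2 x == lift ord0 j)%:R)%R.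

Definition L_def_h {ne : nat} (experts : 'I_ne -> X -> 'I_2) (h : X -> 'I_2)
  (r : X -> 'I_ne.+1 -> R) (x : X) (y : 'I_2) : R :=
  L_def experts (h, r) x y.

Definition L_surr {ne : nat} (experts : 'I_ne -> X -> 'I_2)
  (l2 : (X -> 'I_ne.+1 -> R) -> X -> 'I_ne.+1 -> R) (h : X -> 'I_2)
  (r : X -> 'I_ne.+1 -> R) (x : X) (y : 'I_2) : R :=
  ((h x == y)%:R * l2 r x ord0
   + \sum_(j < ne) (1 - cost experts j x y) * l2 r x (lift ord0 j))%R.

End Defs.

From HB Require Import structures.
From mathcomp Require Import all_boot all_order all_algebra.
From mathcomp Require Import all_classical all_reals all_analysis.
From mathcomp Require Import measurable_realfun lebesgue_measure lebesgue_integral probability.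
From mathcomp Require Import ring lra.

(* At each x the deferral regret of (h, r) is at most the binary 0-1 regret of h plus the
   regret of r for the deferral loss with h fixed; the consistency bound of l1 handles the
   first term.  With h fixed, the conditional deferral risk of r is 1 - q_(r(x)), where q_k
   is the conditional probability that the predictor behind class k (h for k = 0, an expert
   otherwise) is right, and the conditional surrogate risk is the l2-risk under the weights
   q.  The consistency bound of l2, applied to the Dirac marginal at x with label law q / W
   (W = sum_k q_k), gives q_(r'(x)) - q_(r(x)) <= W * Gamma2 (Delta / W) for the surrogate
   regret Delta at x.  This only matters when the predictors behind r(x) and r'(x) disagree,
   and then W <= n_e because their two weights sum to at most 1.  By concavity
   W * Gamma2 (Delta / W) <= n_e * Gamma2 (Delta / n_e), and Jensen's inequality for this
   concave function of Delta integrates the bound; the result is at most n_e * Gamma2 of the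
   surrogate regret, and exactly Gamma2 of it when Gamma2 is linear. *)

Set Implicit Arguments.
Unset Strict Implicit.
Unset Printing Implicit Defensive.
Import Order.TTheory GRing.Theory Num.Theory.
Local Open Scope classical_set_scope.
Local Open Scope ring_scope.
Local Open Scope ereal_scope.

Section AdmissibleGamma.
Local Open Scope ring_scope.
Context {R : realType} (Gam : R -> R).
Hypothesis GamA : admissible_Gamma Gam.

Lemma admissible_Gamma_ge0 t : 0 <= t -> 0 <= Gam t.
Proof. by case: GamA => G0 [Gmono _] t0; rewrite -G0; exact: Gmono. Qed.

Lemma admissible_Gamma_slope_le u M t : 0 <= u -> u < M -> M < t ->
  (Gam t - Gam M) / (t - M) <= (Gam M - Gam u) / (M - u).
Proof.
case: GamA => _ [_ Gconc] u0 uM Mt.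
pose lam := (t - M) / (t - u).
have lam01 : 0 <= lam <= 1.
  by apply/andP; split; [apply: divr_ge0 | rewrite ler_pdivrMr]; lra.
have := Gconc u t lam u0 (ltW (lt_trans (le_lt_trans u0 uM) Mt)) lam01.
have -> : lam * u + (1 - lam) * t = M by rewrite /lam; field; lra.
have -> : lam * Gam u + (1 - lam) * Gam t =
          ((t - M) * Gam u + (M - u) * Gam t) / (t - u) by rewrite /lam; field; lra.
rewrite ler_pdivrMr; last lra.
move=> hconc; rewrite ler_pdivrMr; last lra.
rewrite mulrAC ler_pdivlMr; last lra.
nra.
Qed.

Lemma admissible_Gamma_supergradient M : 0 < M ->
  exists2 s, 0 <= s & forall t, 0 <= t -> Gam t <= Gam M + s * (t - M).
Proof.
case: (GamA) => _ [Gmono _] M0.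
pose E := [set (Gam M - Gam u) / (M - u) | u in [set u | 0 <= u < M]].
have E_ge0 : lbound E 0.
  move=> _ [u /andP[u0 uM] <-].
  by apply: divr_ge0; rewrite subr_ge0 ?(ltW uM) // Gmono // ltW.
have En0 : E !=set0 by exists ((Gam M - Gam 0) / (M - 0)), 0; rewrite //= lexx M0.
exists (inf E); first exact: lb_le_inf.
move=> t t0; case: (ltgtP t M) => [tM|Mt|->]; last by rewrite subrr mulr0 addr0.
- have : inf E <= (Gam M - Gam t) / (M - t).
    by apply: ge_inf; [exists 0 | exists t; rewrite //= t0 tM].
  by rewrite ler_pdivlMr ?subr_gt0 //; nra.
- have : (Gam t - Gam M) / (t - M) <= inf E.
    apply: lb_le_inf => // _ [u /andP[u0 uM] <-].
    exact: admissible_Gamma_slope_le.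
  by rewrite ler_pdivrMr ?subr_gt0 //; nra.
Qed.

Lemma admissible_Gamma_perspective_le W n f : 0 < W -> W <= n -> 0 <= f ->
  W * Gam (f / W) <= n * Gam (f / n).
Proof.
case: GamA => G0 [_ Gconc] W0 Wn f0.
have Wn01 : 0 <= W / n <= 1.
  by apply/andP; split; [apply: divr_ge0 | rewrite ler_pdivrMr]; lra.
have := Gconc (f / W) 0 (W / n) (divr_ge0 f0 (ltW W0)) (lexx 0) Wn01.
rewrite G0 !mulr0 !addr0 (_ : W / n * (f / W) = f / n); last by field; lra.
move/(ler_wpM2l (ltW (lt_le_trans W0 Wn))).
by rewrite (_ : n * (W / n * Gam (f / W)) = W * Gam (f / W)) //; field; lra.
Qed.

Lemma admissible_Gamma_scale n : 0 < n -> admissible_Gamma (fun t => n * Gam (t / n)).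
Proof.
case: GamA => G0 [Gmono Gconc] n0; split; first by rewrite mul0r G0 mulr0.
split=> [u v u0 uv | u v t u0 v0 t01].
  by rewrite ler_pM2l // Gmono ?ler_pM2r ?invr_gt0 ?divr_ge0 //; lra.
have := Gconc (u / n) (v / n) t (divr_ge0 u0 (ltW n0)) (divr_ge0 v0 (ltW n0)) t01.
rewrite (_ : (t * u + (1 - t) * v) / n = t * (u / n) + (1 - t) * (v / n)); last first.
  by field; lra.
move/(ler_wpM2l (ltW n0)); lra.
Qed.

Lemma admissible_Gamma_scale_le n t : 1 <= n -> 0 <= t -> n * Gam (t / n) <= n * Gam t.
Proof.
case: GamA => _ [Gmono _] n1 t0; have n0 : 0 < n by lra.
rewrite ler_pM2l //; apply: Gmono; first exact: divr_ge0 t0 (ltW n0).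
by rewrite ler_pdivrMr //; nra.
Qed.

End AdmissibleGamma.

Section ConcaveIntegral.
Context {R : realType} {d : measure_display} {X : measurableType d}.
Variables (P : probability X R) (Gam : R -> R).
Hypothesis GamA : admissible_Gamma Gam.

Lemma integral_le_Gamma_integral (u f : X -> R) :
  P.-integrable setT (EFin \o u) -> P.-integrable setT (EFin \o f) ->
  (forall x, (0 <= f x)%R) -> (forall x, (u x <= Gam (f x))%R) ->
  \int[P]_x (u x)%:E <= (Gam (fine (\int[P]_x (f x)%:E)))%:E.
Proof.
move=> iu iF f0 uG; have [G0 [Gmono _]] := GamA.
have fin_f : \int[P]_x (f x)%:E \is a fin_num by exact: integrable_fin_num.
set I := fine _; have intfE : \int[P]_x (f x)%:E = I%:E by rewrite fineK.
have I0 : (0 <= I)%R by apply: fine_ge0; apply: integral_ge0 => x _; rewrite lee_fin.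
have [Ipos|Ineg|I0'] := ltgtP 0%R I; first last.
- (* No supergradient need exist at 0 (Gam may jump there), but f = 0 a.e. forces u <= 0 a.e. *)
  have mf : measurable_fun setT (EFin \o f) by exact: measurable_int iF.
  have /(ae_eq_integral_abs P measurableT mf) f_ae0 : \int[P]_x `|(EFin \o f) x| = 0.
    rewrite (eq_integral (fun x => (f x)%:E)) ?intfE -?I0' // => x _.
    by rewrite /= ger0_norm.
  have upos0 : \int[P]_x ((EFin \o u)^\+ x) = \int[P]_x (cst 0 x).
    apply: ae_eq_integral => //; first exact: measurable_funepos (measurable_int _ iu).
    apply: filterS f_ae0 => x /(_ Logic.I) /= [fx0] _.
    by rewrite funeposE /= max_r // lee_fin (le_trans (uG x)) // fx0 G0.
  rewrite -I0' G0 (integralE _ _ (EFin \o u)) upos0 integral0 sub0e.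
  by rewrite leeNl oppe0 integral_ge0 // => x _; exact: funeneg_ge0.
- by move: Ineg; rewrite ltNge I0.
have [s s0 sG] := admissible_Gamma_supergradient GamA Ipos.
pose c := (Gam I - s * I)%R.
have gE : (fun x => (c + s * f x)%:E) = cst c%:E \+ (fun x => s%:E * (f x)%:E).
  by apply/funext => x; rewrite /= EFinD EFinM.
have [ic isf] : P.-integrable setT (cst c%:E) /\ P.-integrable setT (fun x => s%:E * (f x)%:E).
  by split; [exact: finite_measure_integrable_cst | exact: integrableZl].
apply: (@le_trans _ _ (\int[P]_x (c + s * f x)%:E)).
  apply: le_integral => //; first by rewrite gE; exact: integrableD.
  move=> x _; rewrite lee_fin /c.
  by have := sG (f x) (f0 x); have := uG x; lra.
rewrite gE integralD // integral_cst // (_ : _ [set: X] = 1) ?mule1; last exact: probability_setT.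
by rewrite integralZl // intfE -!EFinM -EFinD lee_fin /c; lra.
Qed.

End ConcaveIntegral.

Section NonnegInf.
Context {R : realType} {G : Type} (Gs : set G) (f : G -> R) (g0 : G).
Hypotheses (Gs_g0 : Gs g0) (f_ge0 : forall g, Gs g -> (0 <= f g)%R).

Lemma ereal_inf_ge0_fin_num : ereal_inf [set (f g)%:E | g in Gs] \is a fin_num.
Proof.
rewrite ge0_fin_numE; last by apply: le_ereal_inf_tmp => _ [g Gg <-]; rewrite lee_fin f_ge0.
by apply: le_lt_trans (ltry (f g0)); apply: ereal_inf_lbound; exists g0.
Qed.

Lemma fine_ereal_inf_ge m : (forall g, Gs g -> (m <= f g)%R) ->
  (m <= fine (ereal_inf [set (f g)%:E | g in Gs]))%R.
Proof.
move=> mf; rewrite -lee_fin fineK ?ereal_inf_ge0_fin_num //.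
by apply: le_ereal_inf_tmp => _ [g Gg <-]; rewrite lee_fin mf.
Qed.

Lemma fine_ereal_inf_le g : Gs g -> (fine (ereal_inf [set (f g)%:E | g in Gs]) <= f g)%R.
Proof.
move=> Gg; rewrite -lee_fin fineK ?ereal_inf_ge0_fin_num //.
by apply: ereal_inf_lbound; exists g.
Qed.

End NonnegInf.

Definition cond_inf {R : realType} {d : measure_display} {X : measurableType d}
    {Y : finType} {G : Type} (p : X -> Y -> R) (l : G -> X -> Y -> R) (Gs : set G) (x : X) : R :=
  fine (cond_best p l Gs x).

Definition cond_regret {R : realType} {d : measure_display} {X : measurableType d}
    {Y : finType} {G : Type} (p : X -> Y -> R) (l : G -> X -> Y -> R) (Gs : set G)
    (g : G) (x : X) : R :=
  (cond_risk p l g x - cond_inf p l Gs x)%R.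

Section CondRisk.
Context {R : realType} {d : measure_display} {X : measurableType d} {Y : finType} {G : Type}.
Implicit Types (p : X -> Y -> R) (l : G -> X -> Y -> R).

Lemma cond_risk_ge0 p l g x : (forall y, (0 <= p x y)%R) ->
  (forall y, (0 <= l g x y)%R) -> (0 <= cond_risk p l g x)%R.
Proof. by move=> p0 l0; apply: sumr_ge0 => y _; exact: mulr_ge0. Qed.

Lemma cond_risk_le1 p l g x : label_dist p -> (forall y, (l g x y <= 1)%R) ->
  (cond_risk p l g x <= 1)%R.
Proof.
move=> [p0 p1] l1; rewrite -(p1 x); apply: ler_sum => y _.
by rewrite ler_piMr.
Qed.

Lemma cond_risk_neq p l (a : G -> X -> Y) g x : label_dist p ->
  (forall y, l g x y = (a g x != y)%:R) -> cond_risk p l g x = (1 - p x (a g x))%R.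
Proof.
move=> [_ p1] lE; rewrite /cond_risk -(p1 x) (bigD1 (a g x)) //.
rewrite [X in _ = (X - _)%R](bigD1 (a g x)) // lE eqxx /= mulr0 add0r.
by rewrite addrAC subrr add0r; apply: eq_bigr => y ay; rewrite lE eq_sym ay mulr1.
Qed.

Lemma measurable_cond_risk p l g :
  (forall y, measurable_fun setT (fun x => p x y)) ->
  (forall y, measurable_fun setT (fun x => l g x y)) ->
  measurable_fun setT (cond_risk p l g).
Proof. by move=> mp ml; apply: measurable_sum => y; exact: measurable_funM. Qed.

Lemma exp_risk_dirac p l g x : measurable_fun setT (cond_risk p l g) ->
  exp_risk (\d_x : probability X R) p l g = (cond_risk p l g x)%:E.
Proof.
by move=> mrisk; rewrite /exp_risk integral_dirac ?diracT ?mul1e //; exact/measurable_EFinP.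
Qed.

Lemma exp_risk_lty (P : probability X R) p l g : label_dist p ->
  (forall x y, (0 <= l g x y <= 1)%R) -> measurable_fun setT (cond_risk p l g) ->
  exp_risk P p l g < +oo.
Proof.
move=> lp l01 mrisk; apply: (@le_lt_trans _ _ (\int[P]_x (cst 1 x))).
  apply: ge0_le_integral => //.
  - move=> x _; rewrite lee_fin; apply: cond_risk_ge0 => y; first exact: lp.1.
    by case/andP: (l01 x y).
  - exact/measurable_EFinP.
  - by move=> x _; rewrite /= lee_fin; apply: cond_risk_le1 => // y; case/andP: (l01 x y).
by rewrite integral_cst // (_ : _ [set: X] = 1) ?mule1 ?ltry; last exact: probability_setT.
Qed.

End CondRisk.

Section Regret.
Context {R : realType} {d : measure_display} {X : measurableType d} {Y : finType} {G : Type}.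
Variables (p : X -> Y -> R) (l : G -> X -> Y -> R) (Gs : set G) (g : G).
Hypotheses (p_ge0 : forall x y, (0 <= p x y)%R) (l_ge0 : forall g x y, (0 <= l g x y)%R)
  (Gs_g : Gs g).

Let risk_ge0 g' x : (0 <= cond_risk p l g' x)%R := cond_risk_ge0 (p_ge0 x) (l_ge0 g' x).

Lemma cond_bestE x : cond_best p l Gs x = (cond_inf p l Gs x)%:E.
Proof. by rewrite /cond_inf fineK // (ereal_inf_ge0_fin_num Gs_g). Qed.

Lemma cond_inf_le g' x : Gs g' -> (cond_inf p l Gs x <= cond_risk p l g' x)%R.
Proof. exact: (fine_ereal_inf_le Gs_g). Qed.

Lemma cond_inf_ge m x : (forall g', Gs g' -> (m <= cond_risk p l g' x)%R) ->
  (m <= cond_inf p l Gs x)%R.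
Proof. exact: (fine_ereal_inf_ge Gs_g). Qed.

Lemma cond_regret_ge0 x : (0 <= cond_regret p l Gs g x)%R.
Proof. by rewrite subr_ge0 cond_inf_le. Qed.

Lemma regret_gap_dirac x :
  (forall g', Gs g' -> measurable_fun setT (cond_risk p l g')) ->
  measurable_fun setT (cond_best p l Gs) ->
  regret_gap (\d_x : probability X R) p l Gs g = (cond_regret p l Gs g x)%:E.
Proof.
move=> mcr mcb.
have riskE g' : Gs g' -> exp_risk (\d_x : probability X R) p l g' = (cond_risk p l g' x)%:E.
  by move=> Gg'; exact/exp_risk_dirac/mcr.
have bestE : best_risk (\d_x : probability X R) p l Gs = cond_best p l Gs x.
  by congr ereal_inf; apply: eq_imagel => g' Gg'; exact: riskE.
rewrite /regret_gap /min_gap bestE integral_dirac ?diracT ?mul1e // riskE //.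
by rewrite cond_bestE subee // adde0 EFinB.
Qed.

Variable P : probability X R.
Hypotheses (mrisk : measurable_fun setT (cond_risk p l g))
  (mbest : measurable_fun setT (cond_best p l Gs)) (risk_fin : exp_risk P p l g < +oo).

Lemma integrable_cond_risk : P.-integrable setT (EFin \o cond_risk p l g).
Proof.
apply/integrableP; split; first exact/measurable_EFinP.
rewrite (eq_integral (fun x => (cond_risk p l g x)%:E)); first exact: risk_fin.
by move=> x _; rewrite /= ger0_norm ?risk_ge0.
Qed.

Lemma integrable_cond_inf : P.-integrable setT (EFin \o cond_inf p l Gs).
Proof.
apply: le_integrable integrable_cond_risk => //.
  by apply/measurable_EFinP; exact: measurableT_comp (fine_measurable measurableT) mbest.
move=> x _; rewrite /= lee_fin !ger0_norm ?cond_inf_le ?risk_ge0 //.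
by apply: cond_inf_ge => g' _; exact: risk_ge0.
Qed.

Lemma integrable_cond_regret : P.-integrable setT (EFin \o cond_regret p l Gs g).
Proof.
rewrite (_ : EFin \o _ = (EFin \o cond_risk p l g) \- (EFin \o cond_inf p l Gs)).
  exact: integrableB integrable_cond_risk integrable_cond_inf.
by apply/funext => x /=; rewrite EFinB.
Qed.

Lemma regret_gapE : regret_gap P p l Gs g = \int[P]_x (cond_regret p l Gs g x)%:E.
Proof.
have risk_fin_num : exp_risk P p l g \is a fin_num.
  by rewrite ge0_fin_numE // integral_ge0 // => x _; rewrite lee_fin.
have best_fin_num : best_risk P p l Gs \is a fin_num.
  rewrite ge0_fin_numE; last first.
    by apply: le_ereal_inf_tmp => _ [g' _ <-]; apply: integral_ge0 => x _; rewrite lee_fin.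
  by apply: le_lt_trans risk_fin; apply: ereal_inf_lbound; exists g.
have intbestE : \int[P]_x cond_best p l Gs x = \int[P]_x (cond_inf p l Gs x)%:E.
  by apply: eq_integral => x _; exact: cond_bestE.
have inf_fin_num : \int[P]_x cond_best p l Gs x \is a fin_num.
  by rewrite intbestE; exact: (integrable_fin_num _ integrable_cond_inf).
transitivity (exp_risk P p l g - \int[P]_x cond_best p l Gs x).
  rewrite /regret_gap /min_gap -(fineK risk_fin_num) -(fineK best_fin_num) -(fineK inf_fin_num).
  by rewrite -!EFinB -EFinD addrA subrK.
rewrite intbestE /exp_risk -integralB_EFin //; first exact: integrable_cond_risk.
exact: integrable_cond_inf.
Qed.

Lemma regret_gap_ge0 : 0 <= regret_gap P p l Gs g.
Proof. by rewrite regret_gapE integral_ge0 // => x _; rewrite lee_fin cond_regret_ge0. Qed.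

End Regret.

Section PointwiseConsistency.
Context {R : realType} {d : measure_display} {X : measurableType d} {Y : finType} {G : Type}.
Variables (Gs : set G) (ls lo : G -> X -> Y -> R) (Gam : R -> R).
Hypotheses (cb : consistency_bound Gs ls lo Gam)
  (im_ls : inf_measurable ls Gs) (im_lo : inf_measurable lo Gs)
  (m_ls : forall g, Gs g -> forall y, measurable_fun setT (fun x => ls g x y))
  (m_lo : forall g, Gs g -> forall y, measurable_fun setT (fun x => lo g x y))
  (ls_ge0 : forall g x y, (0 <= ls g x y)%R) (lo_ge0 : forall g x y, (0 <= lo g x y)%R).

Lemma consistency_bound_pointwise (pv : Y -> R) g x : label_dist (fun _ : X => pv) -> Gs g ->
  (cond_regret (fun _ => pv) lo Gs g x <= Gam (cond_regret (fun _ => pv) ls Gs g x))%R.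
Proof.
move=> lpv Gg; have mpv : measurable_label_dist (fun _ : X => pv).
  by split=> // y; exact: measurable_cst.
have mrisk (l : G -> X -> Y -> R) :
    (forall g, Gs g -> forall y, measurable_fun setT (fun x => l g x y)) ->
    forall g, Gs g -> measurable_fun setT (cond_risk (fun _ => pv) l g).
  by move=> ml g' Gg'; apply: measurable_cond_risk => y; [exact: measurable_cst | exact: ml].
have [mls mlo] := (mrisk ls m_ls, mrisk lo m_lo).
have := @cb (\d_x : probability X R) _ mpv g Gg.
rewrite (exp_risk_dirac _ (mls g Gg)) => /(_ (ltry _)).
rewrite (regret_gap_dirac lpv.1 lo_ge0 Gg _ mlo (im_lo mpv)).
by rewrite (regret_gap_dirac lpv.1 ls_ge0 Gg _ mls (im_ls mpv)) lee_fin.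
Qed.

End PointwiseConsistency.

Lemma sum_comp_prob_le {R : realFieldType} {Y : finType} (p : Y -> R) n
    (phi : 'I_n.+1 -> Y) a b :
  (forall y, 0 <= p y)%R -> (\sum_y p y = 1)%R -> phi a != phi b ->
  (\sum_k p (phi k) <= n%:R)%R.
Proof.
move=> p0 p1 ab; have a_b : a != b by apply: contraNneq ab => ->.
have pab : (p (phi a) + p (phi b) <= 1)%R.
  by rewrite -p1 (bigD1 (phi a)) //= (bigD1 (phi b)) 1?eq_sym //= addrA lerDl sumr_ge0.
have p1k k : (p (phi k) <= 1)%R by rewrite -p1 (bigD1 (phi k)) //= lerDl sumr_ge0.
have : ((1 - p (phi a)) + (1 - p (phi b)) <= \sum_k (1 - p (phi k)))%R.
  rewrite (bigD1 a) //= (bigD1 b) 1?eq_sym //= [X in (_ <= X)%R]addrA lerDl.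
  by apply: sumr_ge0 => k _; rewrite subr_ge0.
rewrite sumrB sumr_const card_ord mulrSr; lra.
Qed.

Section FinMeasurable.
Context {R : realType} {d : measure_display} {X : measurableType d}.

Definition fin_measurable {T : finType} (g : X -> T) := forall t, measurable (g @^-1` [set t]).

Lemma fin_measurable_preimage (T : finType) (g : X -> T) A :
  fin_measurable g -> measurable (g @^-1` A).
Proof.
move=> mg; have -> : g @^-1` A = \bigcup_(t in A) g @^-1` [set t].
  by apply/seteqP; split => x /=; [move=> Ax; exists (g x) | case=> t At /= ->].
by apply: fin_bigcup_measurable => //; exact: finite_finset.
Qed.

Lemma measurable_fun_fin_measurable (T : finType) (g : X -> T) (F : T -> R) :
  fin_measurable g -> measurable_fun setT (fun x => F (g x)).
Proof. by move=> mg _ B _; rewrite setTI; exact: (fin_measurable_preimage (F @^-1` B) mg). Qed.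

Lemma fin_measurable_defer_dec ne (r : X -> 'I_ne.+1 -> R) :
  (forall k, measurable_fun setT (fun x => r x k)) -> fin_measurable (defer_dec r).
Proof.
move=> mr.
pose cmp x := [ffun ij : 'I_ne.+1 * 'I_ne.+1 => (r x ij.1 <= r x ij.2)%R].
pose argmax (C : {ffun 'I_ne.+1 * 'I_ne.+1 -> bool}) :=
  odflt ord0 [pick i | [forall j, C (j, i)]].
have decE x : defer_dec r x = argmax (cmp x).
  rewrite /defer_dec /Order.arg_max /extremum /argmax; congr odflt; apply: eq_pick => i /=.
  by apply: eq_forallb => j; rewrite ffunE.
have mcmp : fin_measurable cmp.
  move=> C; have -> : cmp @^-1` [set C] = \bigcap_(ij in [set: 'I_ne.+1 * 'I_ne.+1])
      ((fun x => (r x ij.1 <= r x ij.2)%R) @^-1` [set C ij]).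
    apply/seteqP; split => x /=; first by move=> <- ij _ /=; rewrite ffunE.
    by move=> Cx; apply/ffunP => ij; rewrite ffunE; exact: Cx.
  apply: fin_bigcap_measurable; first exact: finite_finset.
  by move=> ij _; rewrite -[X in measurable X]setTI; exact: measurable_fun_ler.
move=> k; have -> : defer_dec r @^-1` [set k] = cmp @^-1` (argmax @^-1` [set k]).
  by apply/seteqP; split => x /=; rewrite decE.
exact: fin_measurable_preimage.
Qed.

End FinMeasurable.

Section Deferral.
Context {R : realType} {d : measure_display} {X : measurableType d}.
Variables (ne : nat) (experts : 'I_ne -> X -> 'I_2).
Implicit Types (h : X -> 'I_2) (r : X -> 'I_ne.+1 -> R) (eta : X -> 'I_2 -> R).

Definition defer_pred h (k : 'I_ne.+1) : X -> 'I_2 :=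
  if unlift ord0 k is Some j then experts j else h.

Definition defer_weights eta h (x : X) (k : 'I_ne.+1) : R := eta x (defer_pred h k x).

Lemma defer_pred0 h : defer_pred h ord0 = h.
Proof. by rewrite /defer_pred unlift_none. Qed.

Lemma defer_predS h j : defer_pred h (lift ord0 j) = experts j.
Proof. by rewrite /defer_pred liftK. Qed.

Lemma L_defE h r x y : L_def experts (h, r) x y = (defer_pred h (defer_dec r x) x != y)%:R.
Proof.
rewrite /L_def /=; case: (unliftP ord0 (defer_dec r x)) => [j ->|->].
- rewrite [lift _ _ == _]eq_sym (negbTE (neq_lift _ _)) defer_predS mulr0 add0r.
  rewrite (bigD1 j) //= eqxx mulr1 big1 ?addr0 // => i ij.
  by rewrite (inj_eq lift_inj) eq_sym (negbTE ij) mulr0.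
- rewrite defer_pred0 eqxx mulr1 big1 ?addr0 // => i _.
  by rewrite (negbTE (neq_lift _ _)) mulr0.
Qed.

Lemma L_def_ge0 (g : (X -> 'I_2) * (X -> 'I_ne.+1 -> R)) x y : (0 <= L_def experts g x y)%R.
Proof. by case: g => h r; rewrite L_defE ler0n. Qed.

Lemma cond_risk_L_def eta g x : label_dist eta ->
  cond_risk eta (L_def experts) g x = (1 - eta x (defer_pred g.1 (defer_dec g.2 x) x))%R.
Proof.
move=> lp; apply: (cond_risk_neq (a := fun g x => defer_pred g.1 (defer_dec g.2 x) x)) => // y.
by case: g => h r; rewrite L_defE.
Qed.

Lemma L_surrE l2 h r x y :
  L_surr experts l2 h r x y = (\sum_k (defer_pred h k x == y)%:R * l2 r x k)%R.
Proof.
rewrite /L_surr big_ord_recl defer_pred0; congr (_ + _)%R; apply: eq_bigr => j _.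
by rewrite defer_predS /cost; case: (experts j x == y); rewrite ?subr0 ?subrr.
Qed.

Lemma cond_risk_L_surr eta l2 h r x :
  cond_risk eta (L_surr experts l2 h) r x = cond_risk (defer_weights eta h) l2 r x.
Proof.
rewrite /cond_risk; under eq_bigr do rewrite L_surrE mulr_sumr.
rewrite exchange_big; apply: eq_bigr => k _ /=.
rewrite (bigD1 (defer_pred h k x)) //= eqxx /= mul1r big1 ?addr0 // => y yk.
by rewrite eq_sym (negbTE yk) mul0r mulr0.
Qed.

Lemma cond_inf_L_surr eta l2 h (Rc : set (X -> 'I_ne.+1 -> R)) x :
  cond_inf eta (L_surr experts l2 h) Rc x = cond_inf (defer_weights eta h) l2 Rc x.
Proof.
rewrite /cond_inf /cond_best; congr (fine (ereal_inf _)).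
by apply: eq_imagel => r _; rewrite cond_risk_L_surr.
Qed.

Lemma cond_regret_L_def_le eta (H : set (X -> 'I_2)) (Rc : set (X -> 'I_ne.+1 -> R)) h r x :
  label_dist eta -> H h -> Rc r ->
  (cond_regret eta (L_def experts) (H `*` Rc) (h, r) x <=
   cond_regret eta zero_one_bin H h x + cond_regret eta (L_def_h experts h) Rc r x)%R.
Proof.
move=> lp Hh Rr.
have Z_ge0 (h' : X -> 'I_2) x' y : (0 <= zero_one_bin (R:=R) h' x' y)%R by rewrite ler0n.
have Dh_ge0 r' x' y : (0 <= L_def_h experts h r' x' y)%R by exact: L_def_ge0.
have ZE h' : cond_risk eta zero_one_bin h' x = (1 - eta x (h' x))%R.
  exact: (cond_risk_neq (a := fun h' x => h' x)).
have DhE r' : cond_risk eta (L_def_h experts h) r' x =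
    (1 - eta x (defer_pred h (defer_dec r' x) x))%R.
  exact: (cond_risk_L_def (h, r') x lp).
have Z_inf := cond_inf_le lp.1 Z_ge0 Hh x.
have Dh_inf := cond_inf_le lp.1 Dh_ge0 Rr x.
suff : (cond_inf eta zero_one_bin H x + cond_inf eta (L_def_h experts h) Rc x -
        cond_risk eta zero_one_bin h x <= cond_inf eta (L_def experts) (H `*` Rc) x)%R.
  by rewrite /cond_regret; lra.
have HRc : (H `*` Rc) (h, r) by [].
apply: (cond_inf_ge lp.1 L_def_ge0 HRc) => -[h' r'] [/= Hh' Rr'].
rewrite cond_risk_L_def //=; have := Z_inf h Hh; have := Dh_inf r' Rr'; rewrite DhE.
case: (unliftP ord0 (defer_dec r' x)) => [j|] ->.
- by rewrite !defer_predS; lra.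
- by have := Z_inf h' Hh'; rewrite !defer_pred0 !ZE; lra.
Qed.

End Deferral.

Section DeferralMeasurable.
Context {R : realType} {d : measure_display} {X : measurableType d}.
Variables (ne : nat) (experts : 'I_ne -> X -> 'I_2).
Hypothesis m_experts : forall j, fin_measurable (experts j).

Lemma measurable_L_def h (r : X -> 'I_ne.+1 -> R) y : fin_measurable h ->
  (forall k, measurable_fun setT (fun x => r x k)) ->
  measurable_fun setT (fun x => L_def experts (h, r) x y).
Proof.
move=> mh mr; have mdec := fin_measurable_defer_dec mr.
apply: measurable_funD; first apply: measurable_funM.
- exact: (measurable_fun_fin_measurable (fun t => (t != y)%:R) mh).
- exact: (measurable_fun_fin_measurable (fun t => (t == ord0)%:R) mdec).
apply: measurable_sum => j; apply: measurable_funM.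
- exact: (measurable_fun_fin_measurable (fun t => (t != y)%:R) (m_experts j)).
- exact: (measurable_fun_fin_measurable (fun t => (t == lift ord0 j)%:R) mdec).
Qed.

Lemma measurable_L_surr l2 h (r : X -> 'I_ne.+1 -> R) y : fin_measurable h ->
  (forall k, measurable_fun setT (fun x => l2 r x k)) ->
  measurable_fun setT (fun x => L_surr experts l2 h r x y).
Proof.
move=> mh ml2; apply: measurable_funD; first apply: measurable_funM => //.
- exact: (measurable_fun_fin_measurable (fun t => (t == y)%:R) mh).
apply: measurable_sum => j; apply: measurable_funM => //.
apply: measurable_funB; first exact: measurable_cst.
exact: (measurable_fun_fin_measurable (fun t => (t != y)%:R) (m_experts j)).
Qed.

End DeferralMeasurable.

Section DeferralBounds.
Context {R : realType} {d : measure_display} {X : measurableType d}.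
Variables (ne : nat) (experts : 'I_ne -> X -> 'I_2) (Rc : set (X -> 'I_ne.+1 -> R))
  (l2 : (X -> 'I_ne.+1 -> R) -> X -> 'I_ne.+1 -> R) (Gam : R -> R).
Hypotheses (GamA : admissible_Gamma Gam) (cb2 : consistency_bound Rc l2 zero_one_multi Gam)
  (im_l2 : inf_measurable l2 Rc) (im_01 : inf_measurable zero_one_multi Rc)
  (m_r : forall r, Rc r -> forall k, measurable_fun setT (fun x => r x k))
  (m_l2 : forall r, Rc r -> forall k, measurable_fun setT (fun x => l2 r x k))
  (l2_ge0 : forall r x k, (0 <= l2 r x k)%R).
Local Open Scope ring_scope.

Lemma weighted_consistency_bound (q : 'I_ne.+1 -> R) x r r' :
  (forall k, 0 <= q k) -> 0 < \sum_k q k -> Rc r -> Rc r' ->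
  q (defer_dec r' x) - q (defer_dec r x) <=
  (\sum_k q k) * Gam (cond_regret (fun _ => q) l2 Rc r x / \sum_k q k).
Proof.
move=> q0 W0 Rr Rr'; set W := \sum_k q k; pose pv k := q k / W.
have pv0 (x' : X) k : 0 <= pv k by apply: divr_ge0 => //; exact: ltW.
have pv_dist : label_dist (fun _ : X => pv).
  by split=> // _; rewrite -mulr_suml divff // gt_eqF.
have m01 r'' : Rc r'' -> forall k, measurable_fun setT (fun x => zero_one_multi r'' x k).
  move=> Rr'' k; have mdec := fin_measurable_defer_dec (m_r Rr'').
  exact: (measurable_fun_fin_measurable (fun t => (t != k)%:R) mdec).
have z_ge0 (r'' : X -> 'I_ne.+1 -> R) x' k : 0 <= zero_one_multi r'' x' k by rewrite ler0n.
have := consistency_bound_pointwise cb2 im_l2 im_01 m_l2 m01 l2_ge0 z_ge0 x pv_dist Rr.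
have risk01 r'' : cond_risk (fun _ => pv) zero_one_multi r'' x = 1 - pv (defer_dec r'' x).
  exact: (cond_risk_neq (a := fun r x => defer_dec r x)).
have riskl2 r'' : cond_risk (fun _ => pv) l2 r'' x = cond_risk (fun _ => q) l2 r'' x / W.
  by rewrite /cond_risk mulr_suml; apply: eq_bigr => k _; rewrite mulrAC.
have lhs : pv (defer_dec r' x) - pv (defer_dec r x) <=
    cond_regret (fun _ => pv) zero_one_multi Rc r x.
  have := cond_inf_le pv0 z_ge0 Rr x Rr'.
  by rewrite /cond_regret !risk01; lra.
have rhs : cond_regret (fun _ => pv) l2 Rc r x <= cond_regret (fun _ => q) l2 Rc r x / W.
  rewrite /cond_regret riskl2 mulrBl lerD2l lerN2.
  apply: (cond_inf_ge pv0 l2_ge0 Rr) => r'' Rr''; rewrite riskl2 ler_pM2r ?invr_gt0 //.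
  by have := cond_inf_le (fun _ => q0) l2_ge0 Rr x Rr''.
have [_ [Gmono _]] := GamA.
move=> /le_trans/(_ (Gmono _ _ (cond_regret_ge0 pv0 l2_ge0 Rr x) rhs)) bound.
rewrite (_ : _ - _ = W * (pv (defer_dec r' x) - pv (defer_dec r x))); last first.
  by rewrite /pv; field; rewrite gt_eqF.
by rewrite ler_pM2l //; exact: le_trans lhs bound.
Qed.

Lemma cond_regret_L_def_h_le eta h r x : label_dist eta -> Rc r ->
  cond_regret eta (L_def_h experts h) Rc r x <=
  ne%:R * Gam (cond_regret eta (L_surr experts l2 h) Rc r x / ne%:R).
Proof.
move=> lp Rr; set q := defer_weights experts eta h x.
have q0 k : 0 <= q k by exact: lp.1.
have -> : cond_regret eta (L_surr experts l2 h) Rc r x = cond_regret (fun _ => q) l2 Rc r x.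
  by rewrite /cond_regret cond_risk_L_surr cond_inf_L_surr.
have f0 := cond_regret_ge0 (fun _ => q0) l2_ge0 Rr x.
have Dh_ge0 (r' : X -> 'I_ne.+1 -> R) x' y : 0 <= L_def_h experts h r' x' y.
  exact: L_def_ge0.
have DhE r' : cond_risk eta (L_def_h experts h) r' x = 1 - q (defer_dec r' x).
  exact: (cond_risk_L_def experts (h, r') x lp).
rewrite /cond_regret DhE.
suff : 1 - q (defer_dec r x) - ne%:R * Gam (cond_regret (fun _ => q) l2 Rc r x / ne%:R) <=
    cond_inf eta (L_def_h experts h) Rc x by lra.
apply: (cond_inf_ge lp.1 Dh_ge0 Rr) => r' Rr'; rewrite DhE.
have [qle|qlt] := leP (q (defer_dec r' x)) (q (defer_dec r x)).
  have : 0 <= ne%:R * Gam (cond_regret (fun _ => q) l2 Rc r x / ne%:R).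
    by rewrite mulr_ge0 // (admissible_Gamma_ge0 GamA) // divr_ge0.
  lra.
have W0 : 0 < \sum_k q k.
  apply: lt_le_trans (le_lt_trans (q0 _) qlt) _.
  by rewrite (bigD1 (defer_dec r' x)) //= lerDl sumr_ge0.
have Wn : \sum_k q k <= ne%:R.
  apply: (sum_comp_prob_le (phi := fun k => defer_pred experts h k x)
    (a := defer_dec r' x) (b := defer_dec r x) (lp.1 x) (lp.2 x)).
  by apply: contraTneq qlt => /= eq_pred; rewrite /q /defer_weights eq_pred ltxx.
have := weighted_consistency_bound x q0 W0 Rr Rr'.
have := admissible_Gamma_perspective_le GamA W0 Wn f0.
lra.
Qed.

End DeferralBounds.

Section DeferralRegret.
Context {R : realType} {d : measure_display} {X : measurableType d}.
Variables (ne : nat) (experts : 'I_ne -> X -> 'I_2) (Rc : set (X -> 'I_ne.+1 -> R))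
  (P : probability X R) (eta : X -> 'I_2 -> R).
Hypotheses (m_eta : measurable_label_dist eta)
  (m_experts : forall j, fin_measurable (experts j))
  (m_r : forall r, Rc r -> forall k, measurable_fun setT (fun x => r x k)).

Let L_def_h_ge0 h (r : X -> 'I_ne.+1 -> R) x y : (0 <= L_def_h experts h r x y)%R.
Proof. exact: L_def_ge0. Qed.

Let L_def_h_le1 h (r : X -> 'I_ne.+1 -> R) x y : (0 <= L_def_h experts h r x y <= 1)%R.
Proof. by rewrite /L_def_h L_defE ler0n lern1 leq_b1. Qed.

Let measurable_risk_L_def_h h r : fin_measurable h -> Rc r ->
  measurable_fun setT (cond_risk eta (L_def_h experts h) r).
Proof.
move=> mh Rr; apply: measurable_cond_risk => y; first exact: m_eta.2.
exact: measurable_L_def mh (m_r Rr).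
Qed.

Lemma regret_L_def_le H h r : H h -> Rc r -> fin_measurable h ->
  inf_measurable (L_def experts) (H `*` Rc) -> inf_measurable (zero_one_bin (R:=R)) H ->
  inf_measurable (L_def_h experts h) Rc ->
  regret_gap P eta (L_def experts) (H `*` Rc) (h, r) <=
  regret_gap P eta zero_one_bin H h + regret_gap P eta (L_def_h experts h) Rc r.
Proof.
move=> Hh Rr mh im_def im_01 im_def_h; have lp := m_eta.1.
have HRc : (H `*` Rc) (h, r) by [].
have Z_ge0 (h' : X -> 'I_2) x y : (0 <= zero_one_bin (R:=R) h' x y)%R by rewrite ler0n.
have mZ : measurable_fun setT (cond_risk eta zero_one_bin h).
  apply: measurable_cond_risk => y; first exact: m_eta.2.
  exact: (measurable_fun_fin_measurable (fun t => (t != y)%:R) mh).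
have mDh := measurable_risk_L_def_h mh Rr.
have Z_fin : exp_risk P eta zero_one_bin h < +oo.
  by apply: exp_risk_lty => // x y; rewrite ler0n lern1 leq_b1.
have Dh_fin := exp_risk_lty P lp (L_def_h_le1 h r) mDh.
rewrite (regret_gapE lp.1 (L_def_ge0 experts) HRc mDh (im_def _ m_eta) Dh_fin).
rewrite (regret_gapE lp.1 Z_ge0 Hh mZ (im_01 _ m_eta) Z_fin).
rewrite (regret_gapE lp.1 (@L_def_h_ge0 h) Rr mDh (im_def_h _ m_eta) Dh_fin).
have iZ := integrable_cond_regret lp.1 Z_ge0 Hh mZ (im_01 _ m_eta) Z_fin.
have iDh := integrable_cond_regret lp.1 (@L_def_h_ge0 h) Rr mDh (im_def_h _ m_eta) Dh_fin.
have iD := integrable_cond_regret lp.1 (L_def_ge0 experts) HRc mDh (im_def _ m_eta) Dh_fin.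
rewrite -integralD_EFin //; apply: le_integral => //; first exact: integrableD.
by move=> x _; rewrite /= -EFinD lee_fin cond_regret_L_def_le.
Qed.

Variables (l2 : (X -> 'I_ne.+1 -> R) -> X -> 'I_ne.+1 -> R) (Gam : R -> R).
Hypotheses (ne_gt0 : (0 < ne)%N) (GamA : admissible_Gamma Gam)
  (cb2 : consistency_bound Rc l2 zero_one_multi Gam)
  (im_l2 : inf_measurable l2 Rc) (im_01 : inf_measurable zero_one_multi Rc)
  (m_l2 : forall r, Rc r -> forall k, measurable_fun setT (fun x => l2 r x k))
  (l2_ge0 : forall r x k, (0 <= l2 r x k)%R).

Let measurable_risk_L_surr h r : fin_measurable h -> Rc r ->
  measurable_fun setT (cond_risk eta (L_surr experts l2 h) r).
Proof.
move=> mh Rr; apply: measurable_cond_risk => y; first exact: m_eta.2.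
exact: measurable_L_surr mh (m_l2 Rr).
Qed.

Let L_surr_ge0 h r x y : (0 <= L_surr experts l2 h r x y)%R.
Proof. by rewrite L_surrE; apply: sumr_ge0 => k _; rewrite mulr_ge0. Qed.

Lemma regret_L_surr_ge0 h r : fin_measurable h -> Rc r ->
  inf_measurable (L_surr experts l2 h) Rc -> exp_risk P eta (L_surr experts l2 h) r < +oo ->
  0 <= regret_gap P eta (L_surr experts l2 h) Rc r.
Proof.
move=> mh Rr im_surr S_fin.
exact (regret_gap_ge0 m_eta.1.1 (@L_surr_ge0 h) Rr (measurable_risk_L_surr mh Rr)
  (im_surr _ m_eta) S_fin).
Qed.

Lemma regret_L_def_h_le h r : fin_measurable h -> Rc r ->
  inf_measurable (L_def_h experts h) Rc -> inf_measurable (L_surr experts l2 h) Rc ->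
  exp_risk P eta (L_surr experts l2 h) r < +oo ->
  regret_gap P eta (L_def_h experts h) Rc r <=
  (ne%:R * Gam (fine (regret_gap P eta (L_surr experts l2 h) Rc r) / ne%:R))%:E.
Proof.
move=> mh Rr im_def_h im_surr S_fin; have lp := m_eta.1.
have S_ge0 := @L_surr_ge0 h; have mS := measurable_risk_L_surr mh Rr.
have mDh := measurable_risk_L_def_h mh Rr.
have Dh_fin := exp_risk_lty P lp (L_def_h_le1 h r) mDh.
rewrite (regret_gapE lp.1 (@L_def_h_ge0 h) Rr mDh (im_def_h _ m_eta) Dh_fin).
rewrite (regret_gapE lp.1 S_ge0 Rr mS (im_surr _ m_eta) S_fin).
have ne_pos : (0 < ne%:R :> R)%R by rewrite ltr0n.
have iDh := integrable_cond_regret lp.1 (@L_def_h_ge0 h) Rr mDh (im_def_h _ m_eta) Dh_fin.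
have iS := integrable_cond_regret lp.1 S_ge0 Rr mS (im_surr _ m_eta) S_fin.
apply: (integral_le_Gamma_integral (admissible_Gamma_scale GamA ne_pos)) => // x.
  exact: cond_regret_ge0 lp.1 S_ge0 Rr x.
exact: cond_regret_L_def_h_le.
Qed.

End DeferralRegret.

Theorem lemma1 (R : realType) (d : measure_display) (X : measurableType d)
  (ne : nat) (experts : 'I_ne -> X -> 'I_2)
  (H : set (X -> 'I_2)) (Rc : set (X -> 'I_ne.+1 -> R))
  (l1 : (X -> 'I_2) -> X -> 'I_2 -> R)
  (l2 : (X -> 'I_ne.+1 -> R) -> X -> 'I_ne.+1 -> R)
  (Gamma1 Gamma2 : R -> R)
  (P : probability X R) (eta : X -> 'I_2 -> R) :
  (1 <= ne)%N ->
  (* the fixed distribution of (x, y): marginal P, conditional eta *)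
  measurable_label_dist eta ->
  (* measurability of experts, hypotheses and surrogate losses; non-negativity of losses *)
  (forall j (y : 'I_2), measurable (experts j @^-1` [set y])) ->
  (forall h, H h -> forall y : 'I_2, measurable (h @^-1` [set y])) ->
  (forall r, Rc r -> forall k : 'I_ne.+1, measurable_fun [set: X] (fun x => r x k)) ->
  (forall h, H h -> forall y : 'I_2, measurable_fun [set: X] (fun x => l1 h x y)) ->
  (forall r, Rc r -> forall k : 'I_ne.+1, measurable_fun [set: X] (fun x => l2 r x k)) ->
  (forall h x y, (0 <= l1 h x y)%R) ->
  (forall r x k, (0 <= l2 r x k)%R) ->
  (* regularity: pointwise infima of conditional risks are measurable *)
  inf_measurable l1 H -> inf_measurable (zero_one_bin (R:=R)) H ->
  inf_measurable l2 Rc -> inf_measurable zero_one_multi Rc ->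
  inf_measurable (L_def experts) (H `*` Rc) ->
  (forall h, H h -> inf_measurable (L_surr experts l2 h) Rc) ->
  (forall h, H h -> inf_measurable (L_def_h experts h) Rc) ->
  (* consistency-bound assumptions *)
  admissible_Gamma Gamma1 -> admissible_Gamma Gamma2 ->
  consistency_bound H l1 (zero_one_bin (R:=R)) Gamma1 ->
  consistency_bound Rc l2 zero_one_multi Gamma2 ->
  (* main bound *)
  (forall h r, H h -> Rc r ->
     exp_risk P eta l1 h < +oo -> exp_risk P eta (L_surr experts l2 h) r < +oo ->
     regret_gap P eta (L_def experts) (H `*` Rc) (h, r) <=
     (Gamma1 (fine (regret_gap P eta l1 H h))
      + ne%:R * Gamma2 (fine (regret_gap P eta (L_surr experts l2 h) Rc r)))%:E)
  /\
  (* the factor ne can be removed when Gamma2 is linear *)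
  ((exists a : R, forall t, (0 <= t)%R -> Gamma2 t = (a * t)%R) ->
   forall h r, H h -> Rc r ->
     exp_risk P eta l1 h < +oo -> exp_risk P eta (L_surr experts l2 h) r < +oo ->
     regret_gap P eta (L_def experts) (H `*` Rc) (h, r) <=
     (Gamma1 (fine (regret_gap P eta l1 H h))
      + Gamma2 (fine (regret_gap P eta (L_surr experts l2 h) Rc r)))%:E)
  /\
  (* singleton case H = {h0}: R-consistency bound of L^h0_surr w.r.t. L^h0_def *)
  (forall h0, H = [set h0] ->
   forall r, Rc r -> exp_risk P eta (L_surr experts l2 h0) r < +oo ->
     regret_gap P eta (L_def_h experts h0) Rc r <=
     (ne%:R * Gamma2 (fine (regret_gap P eta (L_surr experts l2 h0) Rc r)))%:E)
  /\
  ((exists a : R, forall t, (0 <= t)%R -> Gamma2 t = (a * t)%R) ->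
   forall h0, H = [set h0] ->
   forall r, Rc r -> exp_risk P eta (L_surr experts l2 h0) r < +oo ->
     regret_gap P eta (L_def_h experts h0) Rc r <=
     (Gamma2 (fine (regret_gap P eta (L_surr experts l2 h0) Rc r)))%:E).
Proof.
move=> ne_gt0 m_eta m_experts m_H m_Rc _ m_l2 _ l2_ge0 _ im_bin im_l2 im_multi im_def im_surr
  im_def_h _ GamA2 cb1 cb2.
have surr_ge0 h r : H h -> Rc r -> exp_risk P eta (L_surr experts l2 h) r < +oo ->
    (0 <= fine (regret_gap P eta (L_surr experts l2 h) Rc r))%R.
  move=> Hh Rr S_fin; apply: fine_ge0.
  exact (regret_L_surr_ge0 m_eta m_experts m_l2 l2_ge0 (m_H h Hh) Rr (im_surr h Hh) S_fin).
have def_h_le h r : H h -> Rc r -> exp_risk P eta (L_surr experts l2 h) r < +oo ->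
    regret_gap P eta (L_def_h experts h) Rc r <=
    (ne%:R * Gamma2 (fine (regret_gap P eta (L_surr experts l2 h) Rc r) / ne%:R))%:E.
  move=> Hh Rr; exact (regret_L_def_h_le m_eta m_experts m_Rc ne_gt0 GamA2 cb2 im_l2 im_multi
    m_l2 l2_ge0 (m_H h Hh) Rr (im_def_h h Hh) (im_surr h Hh)).
have def_le h r : H h -> Rc r ->
    exp_risk P eta l1 h < +oo -> exp_risk P eta (L_surr experts l2 h) r < +oo ->
    regret_gap P eta (L_def experts) (H `*` Rc) (h, r) <=
    (Gamma1 (fine (regret_gap P eta l1 H h)) +
     ne%:R * Gamma2 (fine (regret_gap P eta (L_surr experts l2 h) Rc r) / ne%:R))%:E.
  move=> Hh Rr l1_fin S_fin; rewrite EFinD.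
  apply: le_trans (leeD (cb1 P eta m_eta h Hh l1_fin) (def_h_le h r Hh Rr S_fin)).
  exact (regret_L_def_le P m_eta m_experts m_Rc Hh Rr (m_H h Hh) im_def im_bin (im_def_h h Hh)).
have ne_ge1 : (1 <= ne%:R :> R)%R by rewrite ler1n.
have scale_le := admissible_Gamma_scale_le GamA2 ne_ge1.
have scale_lin : (exists a : R, forall t, (0 <= t)%R -> Gamma2 t = (a * t)%R) ->
    forall t, (0 <= t)%R -> (ne%:R * Gamma2 (t / ne%:R))%R = Gamma2 t.
  move=> [a Ga] t t0; rewrite !Ga ?divr_ge0 ?(le_trans ler01 ne_ge1) //.
  by field; rewrite gt_eqF // (lt_le_trans ltr01).
split; [|split; [|split]].
- move=> h r Hh Rr l1_fin S_fin; apply: le_trans (def_le h r Hh Rr l1_fin S_fin) _.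
  by rewrite lee_fin lerD2l scale_le // surr_ge0.
- move=> lin h r Hh Rr l1_fin S_fin.
  by rewrite -(scale_lin lin) ?surr_ge0 //; exact: def_le.
- move=> h0 H0 r Rr S_fin; have Hh0 : H h0 by rewrite H0.
  by apply: le_trans (def_h_le h0 r Hh0 Rr S_fin) _; rewrite lee_fin scale_le // surr_ge0.
- move=> lin h0 H0 r Rr S_fin; have Hh0 : H h0 by rewrite H0.
  by rewrite -(scale_lin lin) ?surr_ge0 //; exact: def_h_le.
Qed.
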